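(* The set $N_0:=S^2\setminus(A\cup -A)$ contains no three mutually orthogonal unit vectors.
   Context: For $t\in[-\tfrac12,0)$ define points of $S^2\subset\mathbb{R}^3$: $\mathbf r_1(t)=\big(\tfrac{1}{\sqrt2},\,t,\,\sqrt{\tfrac12-t^2}\big)$, $\mathbf r_2(t)=\Big(-\tfrac{\frac12+t}{1+t},\,\tfrac1{\sqrt2},\,\tfrac1{\sqrt2}\tfrac{\sqrt{\frac12-t^2}}{1+t}\Big)$, $\mathbf r_3(t)=\mathbf r_1(t)\times\mathbf r_2(t)=\Big(-\tfrac1{\sqrt2}\tfrac{\sqrt{\frac12-t^2}}{1+t},\,-\sqrt{\tfrac12-t^2},\,\tfrac{\frac12+t+t^2}{1+t}\Big)$. Let $R_{\pi/2}$ be the rotation $(x,y,z)\mapsto(-y,x,z)$ (by $\pi/2$ about the $z$-axis). Define $\mathbf r_0:[0,\tfrac14)\to S^2$ by $\mathbf r_0(t)=\mathbf r_1(6t-\tfrac12)$ for $t\in[0,\tfrac1{12})$, $\mathbf r_0(t)=R_{\pi/2}^3\mathbf r_2(6t-1)$ for $t\in[\tfrac1{12},\tfrac16)$, $\mathbf r_0(t)=R_{\pi/2}^2\mathbf r_3(6t-\tfrac32)$ for $t\in[\tfrac16,\tfrac14)$. Define $\mathbf R:[0,1)\to S^2$ by $\mathbf R(t)=R_{\pi/2}^k\,\mathbf r_0(t-\tfrac k4)$ for $t\in[\tfrac k4,\tfrac{k+1}4)$, $k=0,1,2,3$, and extend $\mathbf R$ to $\mathbb R$ periodically with period $1$: $\mathbf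 R(t):=\mathbf R(t-\lfloor t\rfloor)$. The image $\Gamma=\mathbf R(\mathbb R)$ is a closed curve on $S^2$; let $A\subseteq S^2$ be the closed region bounded by $\Gamma$ containing the north pole, i.e. $A=\Gamma\cup C$, where $C$ is the connected component of $S^2\setminus\Gamma$ containing $(0,0,1)$. Also $-A:=\{-n:n\in A\}$. *)

From HB Require Import structures.
From mathcomp Require Import all_boot all_order all_algebra.
From mathcomp Require Import all_classical all_reals all_analysis.
Set Implicit Arguments. Unset Strict Implicit. Unset Printing Implicit Defensive.
Import Order.TTheory GRing.Theory Num.Theory numFieldNormedType.Exports.
Local Open Scope ring_scope.
Local Open Scope classical_set_scope.

Section Curve.
Variable R : realType.

Definition pt := (R * R * R)%type.
Definition mkpt (x y z : R) : pt := ((x, y), z).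
Definition px (p : pt) : R := p.1.1.
Definition py (p : pt) : R := p.1.2.
Definition pz (p : pt) : R := p.2.

Definition dot (p q : pt) : R := px p * px q + py p * py q + pz p * pz q.
Definition cross (p q : pt) : pt :=
  mkpt (py p * pz q - pz p * py q) (pz p * px q - px p * pz q)
       (px p * py q - py p * px q).
Definition neg (p : pt) : pt := mkpt (- px p) (- py p) (- pz p).

Definition S2 : set pt := [set p | dot p p = 1].

Definition rot (p : pt) : pt := mkpt (- py p) (px p) (pz p).

Definition s2 : R := Num.sqrt 2.

Definition r1 (t : R) : pt := mkpt (1 / s2) t (Num.sqrt (2^-1 - t ^+ 2)).
Definition r2 (t : R) : pt :=
  mkpt (- ((2^-1 + t) / (1 + t))) (1 / s2)
       ((1 / s2) * (Num.sqrt (2^-1 - t ^+ 2) / (1 + t))).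
Definition r3 (t : R) : pt := cross (r1 t) (r2 t).

(* r0 on [0, 1/4) *)
Definition r0 (t : R) : pt :=
  if t < 12^-1 then r1 (6 * t - 2^-1)
  else if t < 6^-1 then iter 3 rot (r2 (6 * t - 1))
  else iter 2 rot (r3 (6 * t - 3 / 2)).

Definition Rcurve (t : R) : pt :=
  let s := t - (Num.floor t)%:~R in
  let k := Num.floor (4 * s) in
  iter `|k|%N rot (r0 (s - k%:~R / 4)).

Definition Gamma : set pt := range Rcurve.

Definition north : pt := mkpt 0 0 1.

Definition Ccomp : set pt := @connected_component (R * R * R)%type (S2 `\` Gamma) north.

Definition Aregion : set pt := Gamma `|` Ccomp.

Definition negA : set pt := [set n | Aregion (neg n)].

Definition N0 : set pt := S2 `\` (Aregion `|` negA).

End Curve.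

From Pilot Require Import Defs.
From HB Require Import structures.
From mathcomp Require Import all_boot all_order all_algebra.
From mathcomp Require Import all_classical all_reals all_analysis.
From mathcomp Require Import ring lra.
Import Order.TTheory GRing.Theory Num.Theory numFieldNormedType.Exports.
Set Implicit Arguments. Unset Strict Implicit.
Local Open Scope ring_scope.

(* Project the sphere to the xy-plane and write rho x = sqrt (1 - 2 x^2).  Let [shadow] be the
   region 2 x^2 <= 1, 2 y^2 <= 1, 4 x^2 y^2 <= (rho x + rho y)^2.  Over the upper hemisphere, A
   contains every point projecting into [shadow]: its boundary is the projection of Gamma, and
   an interior point is joined to the north pole by a radial path whose projection stays in the
   interior, hence off Gamma.  So neither a point of N0 nor its antipode projects into [shadow].
   On the other hand, the x- and y-columns (a_i), (b_i) of an orthonormal frame are orthonormal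
   vectors of R^3, and some (a_i, b_i) lies in [shadow]: otherwise each a_i^2 + b_i^2 exceeds
   1/2, and even 3/4 unless 2 a_i^2 > 1 or 2 b_i^2 > 1; as the sum is 2 this forces
   2 a_i^2 > 1 and 2 b_j^2 > 1 for some i <> j, which Lagrange's identity rules out. *)

Section Shadow.
Variable R : rcfType.
Implicit Types a b x y : R.

Definition rho x := Num.sqrt (1 - 2 * x ^+ 2).

Definition shadow x y :=
  [/\ 2 * x ^+ 2 <= 1, 2 * y ^+ 2 <= 1 & 4 * (x ^+ 2 * y ^+ 2) <= (rho x + rho y) ^+ 2].

Definition open_shadow x y :=
  [/\ 2 * x ^+ 2 < 1, 2 * y ^+ 2 < 1 & 4 * (x ^+ 2 * y ^+ 2) < (rho x + rho y) ^+ 2].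

Lemma rho_ge0 x : 0 <= rho x. Proof. exact: sqrtr_ge0. Qed.

Lemma sqr_rho {x} : 2 * x ^+ 2 <= 1 -> rho x ^+ 2 = 1 - 2 * x ^+ 2.
Proof. by move=> hx; rewrite sqr_sqrtr // subr_ge0. Qed.

Lemma shadowN x y : shadow (- x) y = shadow x y.
Proof. by rewrite /shadow /rho sqrrN. Qed.

Lemma open_shadowN x y : open_shadow (- x) y = open_shadow x y.
Proof. by rewrite /open_shadow /rho sqrrN. Qed.

Lemma shadowC x y : shadow x y -> shadow y x.
Proof.
by rewrite /shadow => -[] hx hy h; split => //; rewrite (mulrC (y ^+ 2)) (addrC (rho y)).
Qed.

Lemma open_shadowC x y : open_shadow x y -> open_shadow y x.
Proof.
by rewrite /open_shadow => -[] hx hy h; split => //; rewrite (mulrC (y ^+ 2)) (addrC (rho y)).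
Qed.

Lemma open_shadow00 : open_shadow 0 0.
Proof.
rewrite /open_shadow /rho expr0n /= mulr0 subr0 sqrtr1 mul0r mulr0.
by split; rewrite ?ltr01 // exprn_gt0 // addr_gt0 ?ltr01.
Qed.

Lemma shadow_sqr_lt1 x y : shadow x y -> x ^+ 2 + y ^+ 2 < 1.
Proof.
case=> hx hy h; rewrite ltNge; apply/negP => hxy.
have ex : 1 - 2 * x ^+ 2 = 0 by lra.
have ey : 1 - 2 * y ^+ 2 = 0 by lra.
move: h; rewrite /rho ex ey sqrtr0 addr0 expr0n /=; nra.
Qed.

Lemma open_shadow_scale l x y : 0 <= l <= 1 -> open_shadow x y -> open_shadow (l * x) (l * y).
Proof.
case/andP=> l0 l1 [hx hy h].
have l2 : l ^+ 2 <= 1 by rewrite expr2; nra.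
have lx : (l * x) ^+ 2 <= x ^+ 2 by rewrite exprMn; have := sqr_ge0 x; nra.
have ly : (l * y) ^+ 2 <= y ^+ 2 by rewrite exprMn; have := sqr_ge0 y; nra.
split; [lra | lra |].
have rx : rho x <= rho (l * x) by apply: ler_wsqrtr; lra.
have ry : rho y <= rho (l * y) by apply: ler_wsqrtr; lra.
have prod : 4 * ((l * x) ^+ 2 * (l * y) ^+ 2) <= 4 * (x ^+ 2 * y ^+ 2).
  by have := sqr_ge0 (l * x); have := sqr_ge0 y; nra.
have := rho_ge0 x; have := rho_ge0 y; nra.
Qed.

Lemma rho_add_sqr_eq x y : 2 * x ^+ 2 <= 1 -> 2 * y ^+ 2 <= 1 -> 0 <= x -> 0 <= y ->
  (rho x + rho y) ^+ 2 = 4 * (x ^+ 2 * y ^+ 2) -> rho x + rho y = 2 * x * y.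
Proof.
move=> hx hy x0 y0 e; apply/eqP.
rewrite -(@eqrXn2 _ 2) ?addr_ge0 ?mulr_ge0 ?rho_ge0 // e; apply/eqP; ring.
Qed.

Lemma rim_rho_eq x y : shadow x y -> ~ open_shadow x y ->
  2 * x ^+ 2 < 1 -> 2 * y ^+ 2 < 1 -> 0 <= x -> 0 <= y -> rho x + rho y = 2 * x * y.
Proof.
case=> hx hy h nh hx1 hy1 x0 y0; apply: rho_add_sqr_eq => //.
apply/eqP; rewrite eq_le h andbT leNgt; apply/negP => h'; exact: nh.
Qed.

Lemma rim_half x y : 2 * x ^+ 2 <= 1 -> 2 * y ^+ 2 <= 1 -> 0 <= y ->
  rho x + rho y = 2 * x * y -> 2^-1 <= y.
Proof.
move=> hx hy y0 e.
have := sqr_rho hy; have := sqr_ge0 y.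
have : rho y ^+ 2 <= (2 * x * y) ^+ 2.
  by rewrite -e; have := rho_ge0 x; have := rho_ge0 y; nra.
rewrite !exprMn; nra.
Qed.

Lemma rho_sub_inj x x' y : 0 <= x -> 0 <= x' -> 0 < y ->
  rho x - 2 * x * y = rho x' - 2 * x' * y -> x = x'.
Proof.
move=> x0 x'0 y0 e.
have decr a b : 0 <= a -> a < b -> rho b - 2 * b * y < rho a - 2 * a * y.
  move=> a0 ab; have : rho b <= rho a by apply: ler_wsqrtr; nra.
  nra.
apply/eqP; rewrite eq_le !leNgt.
by apply/andP; split; apply/negP => lt; [have := decr _ _ x'0 lt | have := decr _ _ x0 lt]; lra.
Qed.

Lemma not_shadow_cases {a b} : ~ shadow a b ->
  [\/ 1 < 2 * a ^+ 2, 1 < 2 * b ^+ 2 |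
      [/\ 2 * a ^+ 2 <= 1, 2 * b ^+ 2 <= 1 & 3 / 4 < a ^+ 2 + b ^+ 2]].
Proof.
move=> nab; have [ha|] := lerP (2 * a ^+ 2) 1; last by constructor 1.
have [hb|] := lerP (2 * b ^+ 2) 1; last by constructor 2.
constructor 3; split => //; rewrite ltNge; apply/negP => hab; apply: nab; split => //.
have al2 := sqr_rho ha; have be2 := sqr_rho hb.
have al0 := rho_ge0 a; have be0 := rho_ge0 b.
set al := rho a in al2 al0 *; set be := rho b in be2 be0 *.
have -> : 4 * (a ^+ 2 * b ^+ 2) = (1 - al ^+ 2) * (1 - be ^+ 2) by rewrite al2 be2; ring.
have albe0 : 0 <= al * be by apply: mulr_ge0.
have albe1 : al * be <= 1 by nra.
nra.
Qed.

(* 2 a1 b2 is large and 2 a2 b1 is small, so the cross term a1 b2 - a2 b1 is large;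
   Lagrange's identity turns this into an upper bound on (a1 b1 + a2 b2)^2 = (a3 b3)^2. *)
Lemma shadow_third a1 a2 a3 b1 b2 b3 :
  a1 ^+ 2 + a2 ^+ 2 + a3 ^+ 2 = 1 -> b1 ^+ 2 + b2 ^+ 2 + b3 ^+ 2 = 1 ->
  a1 * b1 + a2 * b2 + a3 * b3 = 0 ->
  1 < 2 * a1 ^+ 2 -> 1 < 2 * b2 ^+ 2 -> 2 * a3 ^+ 2 <= 1 -> 2 * b3 ^+ 2 <= 1 ->
  shadow a3 b3.
Proof.
move=> sa sb sab ha1 hb2 ha3 hb3; split => //.
have al2 := sqr_rho ha3; have be2 := sqr_rho hb3.
have al0 := rho_ge0 a3; have be0 := rho_ge0 b3.
set al := rho a3 in al2 al0 *; set be := rho b3 in be2 be0 *.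
have a20 := sqr_ge0 a2; have a30 := sqr_ge0 a3.
have b10 := sqr_ge0 b1; have b30 := sqr_ge0 b3.
have lagrange : 4 * (a1 * b1 + a2 * b2) ^+ 2 + 4 * (a1 * b2 - a2 * b1) ^+ 2
    = (1 + al ^+ 2) * (1 + be ^+ 2).
  have ea : 1 - a3 ^+ 2 = a1 ^+ 2 + a2 ^+ 2 by lra.
  have eb : 1 - b3 ^+ 2 = b1 ^+ 2 + b2 ^+ 2 by lra.
  have -> : (1 + al ^+ 2) * (1 + be ^+ 2) = 4 * ((1 - a3 ^+ 2) * (1 - b3 ^+ 2)).
    by rewrite al2 be2; ring.
  rewrite ea eb; ring.
have albe1 : al * be <= 1 by nra.
have normK (t : R) : `|t| ^+ 2 = t ^+ 2 by rewrite real_normK ?num_real.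
have big : 1 < `|2 * (a1 * b2)|.
  have := normK (2 * (a1 * b2)); have := normr_ge0 (2 * (a1 * b2)).
  rewrite !exprMn; nra.
have small : `|2 * (a2 * b1)| <= al * be.
  have a2al : 2 * a2 ^+ 2 <= al ^+ 2 by lra.
  have b1be : 2 * b1 ^+ 2 <= be ^+ 2 by lra.
  have : `|2 * (a2 * b1)| ^+ 2 <= (al * be) ^+ 2 by rewrite normK !exprMn; nra.
  by rewrite ler_pXn2r // ?nnegrE ?mulr_ge0.
have cross : (1 - al * be) ^+ 2 <= 4 * (a1 * b2 - a2 * b1) ^+ 2.
  have := lerB_dist (2 * (a1 * b2)) (2 * (a2 * b1)); rewrite -mulrBr.
  have := normK (2 * (a1 * b2 - a2 * b1)); rewrite exprMn; nra.
have -> : a3 ^+ 2 * b3 ^+ 2 = (a1 * b1 + a2 * b2) ^+ 2.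
  by rewrite -exprMn -sqrrN; congr (_ ^+ 2); lra.
nra.
Qed.

Lemma shadow_orthonormal a1 a2 a3 b1 b2 b3 :
  a1 ^+ 2 + a2 ^+ 2 + a3 ^+ 2 = 1 -> b1 ^+ 2 + b2 ^+ 2 + b3 ^+ 2 = 1 ->
  a1 * b1 + a2 * b2 + a3 * b3 = 0 ->
  [\/ shadow a1 b1, shadow a2 b2 | shadow a3 b3].
Proof.
move=> sa sb sab.
have [s1|n1] := asboolP (shadow a1 b1); first by constructor 1.
have [s2|n2] := asboolP (shadow a2 b2); first by constructor 2.
have [s3|n3] := asboolP (shadow a3 b3); first by constructor 3.
exfalso.
have a10 := sqr_ge0 a1; have a20 := sqr_ge0 a2; have a30 := sqr_ge0 a3.
have b10 := sqr_ge0 b1; have b20 := sqr_ge0 b2; have b30 := sqr_ge0 b3.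
have [A1|B1|[? ? ?]] := not_shadow_cases n1;
have [A2|B2|[? ? ?]] := not_shadow_cases n2;
have [A3|B3|[? ? ?]] := not_shadow_cases n3; try lra.
- by apply: n3; apply: (@shadow_third a1 a2 a3 b1 b2 b3).
- by apply: n2; apply: (@shadow_third a1 a3 a2 b1 b3 b2); lra.
- by apply: n3; apply: (@shadow_third a2 a1 a3 b2 b1 b3); lra.
- by apply: n2; apply: (@shadow_third a3 a1 a2 b3 b1 b2); lra.
- by apply: n1; apply: (@shadow_third a2 a3 a1 b2 b3 b1); lra.
- by apply: n1; apply: (@shadow_third a3 a2 a1 b3 b2 b1); lra.
Qed.

End Shadow.

Section Sphere.
Variable R : realType.
Implicit Types (p q : pt R) (t x y : R).
Local Notation rot := (@Defs.rot R).

Lemma pt_eta p : p = mkpt (px p) (py p) (pz p).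
Proof. by case: p => [[]]. Qed.

Lemma S2E p : S2 p = (px p ^+ 2 + py p ^+ 2 + pz p ^+ 2 = 1).
Proof. by rewrite !expr2. Qed.

Lemma px_rot p : px (rot p) = - py p. Proof. by []. Qed.
Lemma py_rot p : py (rot p) = px p. Proof. by []. Qed.

Lemma rot4 p : iter 4 rot p = p.
Proof. by case: p => [[a b] c]; rewrite /= /Defs.rot /mkpt /px /py /pz /= !opprK. Qed.

Lemma rot3 p : iter 3 rot p = mkpt (py p) (- px p) (pz p).
Proof. by rewrite /= /Defs.rot /mkpt /px /py /pz /= opprK. Qed.

Lemma rot2 p : iter 2 rot p = mkpt (- px p) (- py p) (pz p).
Proof. by []. Qed.

Lemma iter_rot_mulr4 n p : iter (n * 4) rot p = p.
Proof. by elim: n => [//|n IH]; rewrite mulSn iterD rot4. Qed.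

Lemma S2_iter_rot n p : S2 p -> S2 (iter n rot p).
Proof. by elim: n => [//|n IH] /IH; rewrite !S2E /= sqrrN; lra. Qed.

Definition upper x y : pt R := mkpt x y (Num.sqrt (1 - x ^+ 2 - y ^+ 2)).

Lemma upperE {p} : S2 p -> 0 <= pz p -> upper (px p) (py p) = p.
Proof.
rewrite S2E => hp hz; rewrite [RHS]pt_eta /upper.
by rewrite (_ : 1 - _ - _ = pz p ^+ 2) ?sqrtr_sqr ?ger0_norm //; lra.
Qed.

Lemma eq_upper p q : S2 p -> S2 q -> 0 <= pz p -> 0 <= pz q ->
  px p = px q -> py p = py q -> p = q.
Proof. by move=> Sp Sq zp zq ex ey; rewrite -(upperE Sp zp) -(upperE Sq zq) ex ey. Qed.

Lemma S2_upper x y : x ^+ 2 + y ^+ 2 <= 1 -> S2 (upper x y).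
Proof. by move=> h; rewrite S2E /upper /px /py /pz /= sqr_sqrtr; lra. Qed.

Lemma sqr_s2 : s2 R ^+ 2 = 2.
Proof. by rewrite sqr_sqrtr // ler0n. Qed.

Lemma s2_gt0 : 0 < s2 R.
Proof. by rewrite sqrtr_gt0 ltr0n. Qed.

Lemma sqr_inv_s2 : (1 / s2 R) ^+ 2 = 2^-1.
Proof. by rewrite expr_div_n sqr_s2 expr1n mul1r. Qed.

Lemma inv_s2 : 1 / s2 R = s2 R / 2.
Proof. by rewrite -[X in _ = _ / X]sqr_s2; field; rewrite gt_eqF // s2_gt0. Qed.

Lemma inv_s2_unique x : 0 < x -> 2 * x ^+ 2 = 1 -> x = 1 / s2 R.
Proof.
move=> x0 hx; apply/eqP; rewrite -(@eqrXn2 _ 2) ?divr_ge0 ?ltW ?s2_gt0 //.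
by rewrite sqr_inv_s2; apply/eqP; lra.
Qed.

Local Notation S t := (Num.sqrt (2^-1 - t ^+ 2)).

Lemma sqr_S t : -2^-1 <= t < 0 -> S t ^+ 2 = 2^-1 - t ^+ 2.
Proof. by case/andP=> t0 t1; rewrite sqr_sqrtr //; nra. Qed.

Lemma S2_r1 t : -2^-1 <= t < 0 -> S2 (r1 t).
Proof. by move=> ht; rewrite S2E /r1 /px /py /pz /= sqr_inv_s2 sqr_S //; lra. Qed.

Lemma S2_r2 t : -2^-1 <= t < 0 -> S2 (r2 t).
Proof.
move=> ht; have t1 : 1 + t != 0 by case/andP: ht => *; rewrite gt_eqF //; lra.
rewrite S2E /r2 /px /py /pz /= sqr_inv_s2 [(1 / s2 R * _) ^+ 2]exprMn sqr_inv_s2 !expr_div_n.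
by rewrite sqr_S //; field.
Qed.

Lemma rot2_r3E t : -2^-1 <= t < 0 -> iter 2 rot (r3 t) =
  mkpt (1 / s2 R * S t / (1 + t)) (S t) ((2^-1 + t + t ^+ 2) / (1 + t)).
Proof.
move=> ht; have t1 : 1 + t != 0 by case/andP: ht => *; rewrite gt_eqF //; lra.
rewrite rot2 /r3 /cross /r1 /r2 /px /py /pz /=.
have cc : 1 / s2 R * (1 / s2 R) = 2^-1 by rewrite -expr2 sqr_inv_s2.
set c := 1 / s2 R in cc *.
congr mkpt; first by field.
  by rewrite [c * (c * _)]mulrA cc; field.
by rewrite cc; field.
Qed.

Lemma S2_rot2_r3 t : -2^-1 <= t < 0 -> S2 (iter 2 rot (r3 t)).
Proof.
move=> ht; have t1 : 1 + t != 0 by case/andP: ht => *; rewrite gt_eqF //; lra.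
rewrite rot2_r3E // S2E /= !expr_div_n [(1 / s2 R * _) ^+ 2]exprMn sqr_inv_s2.
by rewrite sqr_S //; field.
Qed.

Lemma rho_corner t : -2^-1 <= t < 0 ->
  rho (1 / s2 R * S t / (1 + t)) + rho (S t) = 2 * (1 / s2 R * S t / (1 + t)) * S t.
Proof.
move=> ht; have /andP[t0 t1] := ht.
have t1n0 : 1 + t != 0 by rewrite gt_eqF //; lra.
have s0 := s2_gt0.
have rX : rho (1 / s2 R * S t / (1 + t)) = s2 R * ((t + 2^-1) / (1 + t)).
  rewrite /rho (_ : 1 - _ = (s2 R * ((t + 2^-1) / (1 + t))) ^+ 2).
    by rewrite sqrtr_sqr ger0_norm // mulr_ge0 ?divr_ge0 //; lra.
  rewrite expr_div_n [(1 / s2 R * _) ^+ 2]exprMn sqr_inv_s2 sqr_S //.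
  by rewrite exprMn sqr_s2 expr_div_n; field.
have rS : rho (S t) = s2 R * (- t).
  rewrite /rho (_ : 1 - _ = (s2 R * (- t)) ^+ 2).
    by rewrite sqrtr_sqr ger0_norm // mulr_ge0 //; lra.
  by rewrite exprMn sqr_S // sqr_s2 sqrrN; field.
rewrite rX rS inv_s2.
have -> : 2 * (s2 R / 2 * S t / (1 + t)) * S t = s2 R * (S t ^+ 2 / (1 + t)).
  by rewrite expr2; field.
by rewrite sqr_S //; field.
Qed.

Lemma Rcurve_r0 t : exists n (s : R), 0 <= s < 4^-1 /\ Rcurve t = iter n rot (r0 s).
Proof.
rewrite /Rcurve; set s := t - _; set k := Num.floor (4 * s).
exists `|k|%N, (s - k%:~R / 4); split => //.
have := floor_le t; have := floorD1_gt t.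
have := floor_le (4 * s); have := floorD1_gt (4 * s).
rewrite -/k !intrD => *; apply/andP; split; lra.
Qed.

Lemma Rcurve_quarter (j : nat) s : (j < 4)%N -> 0 <= s < 4^-1 ->
  Rcurve (j%:R / 4 + s) = iter j rot (r0 s).
Proof.
move=> hj /andP[s0 s1].
have hj3 : (j%:R : R) <= 3 by rewrite (ler_nat R j 3) -ltnS.
have hj0 : (0 : R) <= j%:R by apply: ler0n.
rewrite /Rcurve.
have -> : Num.floor (j%:R / 4 + s) = 0.
  by apply: floor_def; rewrite add0r mulr0z mulr1z; apply/andP; split; lra.
have -> : Num.floor (4 * (j%:R / 4 + s - (0 : int)%:~R)) = j%:Z.
  apply: floor_def; rewrite intrD mulr0z mulr1z -[(j%:Z)%:~R]/(j%:R : R).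
  by apply/andP; split; lra.
by rewrite absz_nat -[(j%:Z)%:~R]/(j%:R : R) mulr0z; congr (iter j _ (r0 _)); lra.
Qed.

Lemma Gamma_rot_r0 n s : 0 <= s < 4^-1 -> Gamma (iter n rot (r0 s)).
Proof.
move=> hs; rewrite (divn_eq n 4) iterD iter_rot_mulr4.
by exists ((n %% 4)%:R / 4 + s) => //; rewrite Rcurve_quarter // ltn_mod.
Qed.

Lemma Gamma_iter_rot n p : Gamma p -> Gamma (iter n rot p).
Proof.
case=> t _ <-; have [m [s [hs ->]]] := Rcurve_r0 t.
by rewrite -iterD; apply: Gamma_rot_r0.
Qed.

Lemma Gamma_iter_rotE n p : Gamma (iter n rot p) -> Gamma p.
Proof. by move/(Gamma_iter_rot (n * 3)); rewrite -iterD -mulnSr iter_rot_mulr4. Qed.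

Lemma r0_cases s : 0 <= s < 4^-1 -> exists2 t, -2^-1 <= t < 0 &
  [\/ r0 s = r1 t, r0 s = iter 3 rot (r2 t) | r0 s = iter 2 rot (r3 t)].
Proof.
case/andP=> s0 s1; rewrite /r0.
case: ifP => h1; first by exists (6 * s - 2^-1); [apply/andP; split; lra | constructor 1].
case: ifP => h2; move/negbT: h1; rewrite -leNgt => h1.
  by exists (6 * s - 1); [apply/andP; split; lra | constructor 2].
move/negbT: h2; rewrite -leNgt => h2.
by exists (6 * s - 3 / 2); [apply/andP; split; lra | constructor 3].
Qed.

Lemma Gamma_r1 t : -2^-1 <= t < 0 -> Gamma (r1 t).
Proof.
move=> /andP[t0 t1].
have hs : 0 <= (t + 2^-1) / 6 < 4^-1 by apply/andP; split; lra.
have := Gamma_rot_r0 0 hs; rewrite /= /r0 ifT; last by lra.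
by rewrite (_ : 6 * _ - _ = t) //; field.
Qed.

Lemma Gamma_r2 t : -2^-1 <= t < 0 -> Gamma (iter 3 rot (r2 t)).
Proof.
move=> /andP[t0 t1].
have hs : 0 <= (t + 1) / 6 < 4^-1 by apply/andP; split; lra.
have := Gamma_rot_r0 0 hs; rewrite /= /r0 ifF; last by apply/negbTE; rewrite -leNgt; lra.
rewrite ifT; last by lra.
by rewrite (_ : 6 * _ - _ = t) //; field.
Qed.

Lemma Gamma_r3 t : -2^-1 <= t < 0 -> Gamma (iter 2 rot (r3 t)).
Proof.
move=> /andP[t0 t1].
have hs : 0 <= (t + 3 / 2) / 6 < 4^-1 by apply/andP; split; lra.
have := Gamma_rot_r0 0 hs; rewrite /= /r0 ifF; last by apply/negbTE; rewrite -leNgt; lra.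
rewrite ifF; last by apply/negbTE; rewrite -leNgt; lra.
by rewrite (_ : 6 * _ - _ = t) //; field.
Qed.

Lemma open_shadow_iter_rot n p :
  open_shadow (px (iter n rot p)) (py (iter n rot p)) -> open_shadow (px p) (py p).
Proof. by elim: n => [//|n IH] /=; rewrite open_shadowN => /open_shadowC /IH. Qed.

Lemma Gamma_not_open_shadow p : Gamma p -> ~ open_shadow (px p) (py p).
Proof.
case=> t _ <-; have [n [s [hs ->]]] := Rcurve_r0 t; move/open_shadow_iter_rot.
have [u hu [->|->|->]] := r0_cases hs.
- by case; rewrite /r1 /px /= sqr_inv_s2; lra.
- by rewrite rot3; case; rewrite /r2 /px /py /= sqr_inv_s2; lra.
- rewrite rot2_r3E // /px /py /= => -[_ _]; rewrite rho_corner //.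
  by rewrite !exprMn; lra.
Qed.

Lemma Gamma_side p : S2 p -> 0 <= pz p -> px p = 1 / s2 R -> -2^-1 <= py p < 2^-1 ->
  Gamma p.
Proof.
move=> Sp zp ex /andP[y0 y1]; set y := py p in y0 y1.
have [yneg|ypos] := ltP y 0.
  suff -> : p = r1 y by apply: Gamma_r1; apply/andP.
  by apply: eq_upper => //; [apply: S2_r1; apply/andP | apply: sqrtr_ge0].
pose t := (y - 2^-1) / (1 - y).
have y1n0 : 1 - y != 0 by rewrite gt_eqF //; lra.
have et : 1 + t = 2^-1 / (1 - y) by rewrite /t; field.
have ht : -2^-1 <= t < 0.
  have et' : t + 2^-1 = y / 2 / (1 - y) by rewrite /t; field.
  apply/andP; split; first by rewrite -subr_ge0 opprK et' divr_ge0 //; lra.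
  by rewrite /t ltr_pdivrMr ?mul0r; lra.
have t1 : 0 < 1 + t by rewrite et divr_gt0 //; lra.
suff -> : p = iter 3 rot (r2 t) by apply: Gamma_r2.
apply: eq_upper => //; first by apply: S2_iter_rot; apply: S2_r2.
  by rewrite rot3 /r2 /pz /=; rewrite mulr_ge0 ?divr_ge0 ?sqrtr_ge0 ?s2_gt0 ?ltW.
  by rewrite rot3 ex.
by rewrite rot3 /r2 /py /= opprK -/y et /t; field.
Qed.

Lemma rim_corner p : S2 p -> 0 < pz p -> 0 <= px p -> 2^-1 <= py p -> 2 * py p ^+ 2 < 1 ->
  rho (px p) + rho (py p) = 2 * px p * py p -> Gamma p.
Proof.
move=> Sp zp x0 y1 hy e; set y := py p in y1 hy e.
(* r3 (- w) has y-coordinate y, and the rim equation then forces its x-coordinate. *)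
pose w := Num.sqrt (2^-1 - y ^+ 2).
have w2 : w ^+ 2 = 2^-1 - y ^+ 2 by rewrite sqr_sqrtr //; lra.
have w0 : 0 < w by rewrite sqrtr_gt0; lra.
have ht : -2^-1 <= - w < 0 by apply/andP; split; nra.
have Sw : S (- w) = y by rewrite sqrrN w2 (_ : _ - _ = y ^+ 2) ?sqrtr_sqr ?ger0_norm //; lra.
have t1 : 0 < 1 + - w by lra.
have ex : px p = 1 / s2 R * y / (1 + - w).
  have X0 : 0 <= 1 / s2 R * y / (1 + - w).
    by rewrite divr_ge0 ?mulr_ge0 ?divr_ge0 ?ltW ?invr_gt0 ?s2_gt0 //; lra.
  apply: (rho_sub_inj x0 X0 (_ : 0 < y)); first by lra.
  by have := rho_corner ht; rewrite Sw; lra.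
suff -> : p = iter 2 rot (r3 (- w)) by apply: Gamma_r3.
apply: (eq_upper Sp (S2_rot2_r3 ht) (ltW zp)); rewrite rot2_r3E // Sw //.
by rewrite /pz /= divr_ge0 ?ltW //; nra.
Qed.

Definition on_rim p :=
  [/\ S2 p, 0 < pz p, shadow (px p) (py p) & ~ open_shadow (px p) (py p)].

Lemma on_rim_iter_rot n p : on_rim p -> on_rim (iter n rot p).
Proof.
move=> rp; elim: n => [//|n [Sp zp sp np]]; split => //=.
- exact: (S2_iter_rot 1).
- by rewrite shadowN; apply: shadowC.
- by rewrite open_shadowN => /open_shadowC.
Qed.

Lemma rim_side p : on_rim p -> 0 < px p -> 2 * px p ^+ 2 = 1 -> Gamma p.
Proof.
case=> Sp zp [_ hy h] _ x0 hx.
have rx : rho (px p) = 0 by rewrite /rho (_ : 1 - _ = 0) ?sqrtr0 //; lra.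
have ex : px p ^+ 2 = 2^-1 by lra.
have y2 : 4 * py p ^+ 2 <= 1 by move: h; rewrite rx add0r sqr_rho // ex; lra.
have [y1|y1] := ltP (py p) 2^-1.
  apply: Gamma_side => //; [exact: ltW | exact: inv_s2_unique | apply/andP; split; nra].
have ey : py p = 2^-1 by nra.
have hy2 : 2 * py p ^+ 2 < 1 by rewrite ey expr2; lra.
apply: (rim_corner Sp zp (ltW x0) _ hy2); first by rewrite ey.
apply: rho_add_sqr_eq; [lra | lra | exact: ltW | lra |].
by rewrite rx add0r sqr_rho // ex ey expr2; lra.
Qed.

Lemma rim_quadrant p : on_rim p -> 0 <= px p -> 0 <= py p ->
  2 * px p ^+ 2 < 1 -> 2 * py p ^+ 2 < 1 -> Gamma p.
Proof.
case=> Sp zp sp np x0 y0 hx hy; have e := rim_rho_eq sp np hx hy x0 y0.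
exact: (rim_corner Sp zp x0 (rim_half (ltW hx) (ltW hy) y0 e) hy e).
Qed.

Lemma first_quadrant_rot p : px p != 0 \/ py p != 0 ->
  exists n, 0 < px (iter n rot p) /\ 0 <= py (iter n rot p).
Proof.
move=> nz; have [x0|x0|x0] := ltgtP (px p) 0; have [y0|y0|y0] := ltgtP (py p) 0.
- by exists 2%N; rewrite /= !(px_rot, py_rot); split; lra.
- by exists 3%N; rewrite /= !(px_rot, py_rot); split; lra.
- by exists 2%N; rewrite /= !(px_rot, py_rot); split; lra.
- by exists 1%N; rewrite /= !(px_rot, py_rot); split; lra.
- by exists 0%N; split; lra.
- by exists 0%N; split; lra.
- by exists 1%N; rewrite /= !(px_rot, py_rot); split; lra.
- by exists 3%N; rewrite /= !(px_rot, py_rot); split; lra.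
- by move: nz; rewrite x0 y0 eqxx; case.
Qed.

Lemma rim_Gamma p : on_rim p -> Gamma p.
Proof.
move=> rp; have [Sp zp sp np] := rp.
have nz : px p != 0 \/ py p != 0.
  case: (eqVneq (px p) 0) => [x0|]; last by left.
  case: (eqVneq (py p) 0) => [y0|]; last by right.
  by move: np; rewrite x0 y0 => /(_ (open_shadow00 R)).
have [n [x0 y0]] := first_quadrant_rot nz.
apply: (@Gamma_iter_rotE n); have := on_rim_iter_rot n rp.
move: x0 y0; set q := iter n rot p => x0 y0 rq; have [_ _ [hx hy _] _] := rq.
have [hx1|hx1] := ltP (2 * px q ^+ 2) 1; last by apply: rim_side => //; lra.
have [hy1|hy1] := ltP (2 * py q ^+ 2) 1; last first.
  apply: (@Gamma_iter_rotE 3); apply: rim_side; first exact: on_rim_iter_rot.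
    by rewrite /= !(px_rot, py_rot) opprK; nra.
  by rewrite /= !(px_rot, py_rot) opprK; lra.
by apply: rim_quadrant => //; apply: ltW.
Qed.

Lemma continuous_upper_ray x y : continuous (fun l : R => upper (l * x) (l * y)).
Proof.
move=> l; rewrite /continuous_at /upper /mkpt.
apply: (@cvg_pair _ _ _ _ (nbhs (l * x, l * y))
  (nbhs (Num.sqrt (1 - (l * x) ^+ 2 - (l * y) ^+ 2)))).
  apply: (@cvg_pair _ _ _ _ (nbhs (l * x)) (nbhs (l * y))).
- by apply: cvgM; [apply: cvg_id | apply: cvg_cst].
- by apply: cvgM; [apply: cvg_id | apply: cvg_cst].
apply: continuous_comp; last exact: sqrt_continuous.
have cvg_sqr (a : R) : ((t * a) ^+ 2 @[t --> l] --> (l * a) ^+ 2)%classic.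
  by apply: cvgM; apply: cvgM; [apply: cvg_id | apply: cvg_cst | apply: cvg_id | apply: cvg_cst].
by apply: cvgB; [apply: cvgB; [apply: cvg_cst | apply: cvg_sqr] | apply: cvg_sqr].
Qed.

Lemma Ccomp_open_shadow p : S2 p -> 0 < pz p -> open_shadow (px p) (py p) -> Ccomp p.
Proof.
move=> Sp zp sp.
have r1 : px p ^+ 2 + py p ^+ 2 <= 1 by move: Sp; rewrite S2E; have := sqr_ge0 (pz p); lra.
pose ray l := upper (l * px p) (l * py p).
apply: (@connected_component_max _ _ (ray @` `[0, 1])).
- exists 0; first by rewrite /= in_itv /= lexx ler01.
  by rewrite /ray /upper !mul0r expr0n /= !subr0 sqrtr1.
- move=> q [l hl <-]; have l01 : 0 <= l <= 1 by move: hl; rewrite /= in_itv.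
  have /andP[l0 l1] := l01.
  split; last by move/Gamma_not_open_shadow; apply; apply: open_shadow_scale.
  by apply: S2_upper; rewrite !exprMn; have := sqr_ge0 l; nra.
- apply: connected_continuous_connected; first exact: segment_connected.
  exact/continuous_subspaceT/continuous_upper_ray.
- exists 1; first by rewrite /= in_itv /= lexx ler01.
  by rewrite /ray !mul1r upperE // ltW.
Qed.

Lemma A_upper_shadow p : S2 p -> 0 < pz p -> shadow (px p) (py p) -> Aregion p.
Proof.
move=> Sp zp sp; have [op|np] := pselect (open_shadow (px p) (py p)).
  by right; apply: Ccomp_open_shadow.
by left; apply: rim_Gamma.
Qed.

Lemma N0_not_shadow q : N0 q -> ~ shadow (px q) (py q).
Proof.
case=> Sq nA sq; have := shadow_sqr_lt1 sq; move: (Sq); rewrite S2E => e lt1.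
have [zneg|zpos|z0] := ltgtP (pz q) 0; last by move: e; rewrite z0 expr0n /=; lra.
- apply: nA; right; rewrite /negA /=; apply: A_upper_shadow.
  + by rewrite S2E /neg /mkpt /px /py /pz /= !sqrrN.
  + by rewrite /neg /mkpt /pz /= oppr_gt0.
  + by rewrite /neg /mkpt /px /py /= shadowN; apply: shadowC; rewrite shadowN; apply: shadowC.
- by apply: nA; left; apply: A_upper_shadow.
Qed.

Lemma orthonormal_columns (u v w : pt R) :
  S2 u -> S2 v -> S2 w -> dot u v = 0 -> dot v w = 0 -> dot u w = 0 ->
  [/\ px u ^+ 2 + px v ^+ 2 + px w ^+ 2 = 1,
      py u ^+ 2 + py v ^+ 2 + py w ^+ 2 = 1 &
      px u * py u + px v * py v + px w * py w = 0].
Proof.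
rewrite /S2 /dot /= => uu vv ww uv vw uw.
pose M : 'M[R]_3 := \matrix_(i, j)
  nth 0 (nth [::] [:: [:: px u; py u; pz u]; [:: px v; py v; pz v];
                     [:: px w; py w; pz w]] i) j.
have MMt : M *m M^T = 1%:M.
  apply/matrixP => i k; rewrite !mxE !big_ord_recr big_ord0 /= !mxE.
  by case: i k => [[|[|[|?]]] ?] [[|[|[|?]]] ?] //=; lra.
have MtM := mulmx1C MMt.
have := congr1 (fun A : 'M[R]_3 => A 0 0) MtM; have := congr1 (fun A : 'M[R]_3 => A 1 1) MtM.
have := congr1 (fun A : 'M[R]_3 => A 0 1) MtM.
by rewrite !mxE !big_ord_recr !big_ord0 /= !mxE /= !expr2 => *; split; lra.
Qed.

End Sphere.

Theorem proposition3p5 (R : realType) :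
  ~ (exists u v w : pt R,
       [/\ N0 u, N0 v & N0 w] /\
       [/\ dot u v = 0, dot v w = 0 & dot u w = 0]).
Proof.
move=> [u [v [w [[Nu Nv Nw] [uv vw uw]]]]].
have [cx cy cxy] := orthonormal_columns Nu.1 Nv.1 Nw.1 uv vw uw.
case: (shadow_orthonormal cx cy cxy).
- exact: N0_not_shadow Nu.
- exact: N0_not_shadow Nv.
- exact: N0_not_shadow Nw.
Qed.
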